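(* Let $f(t)=1+\sum_{i=1}^{d}f_{i-1}t^{i}$ be a polynomial with positive integer coefficients $f_0,\dots,f_{d-1}$, all of whose roots are real. Then $(1,f_0,\dots,f_{d-1})$ is the $h$-vector of a Cohen–Macaulay simplicial complex; equivalently, $\kappa_{i+1}(f_i)\le f_{i-1}$ for all $0\le i\le d-1$ (with $f_{-1}=1$).
   Context: Given positive integers $m$ and $i$, $m$ has a unique $i$-th binomial expansion $m=\binom{a_i}{i}+\binom{a_{i-1}}{i-1}+\cdots+\binom{a_j}{j}$ with $a_i>a_{i-1}>\cdots>a_j\ge j\ge1$. Define $\kappa_i(m)=\binom{a_i-1}{i-1}+\binom{a_{i-1}-1}{i-2}+\cdots+\binom{a_j-1}{j-1}$. For a simplicial complex $\Delta$ of dimension $d-1$ with $f$-vector $(f_{-1},\dots,f_{d-1})$ ($f_i$ = number of $i$-dimensional faces, $f_{-1}=1$), the $h$-polynomial $\sum_{i=0}^{d} h_i t^i$ is defined by $\sum h_it^i=(1-t)^{d}\sum_{i=0}^{d}f_{i-1}(t/(1-t))^{i}$, and $(h_0,\dots,h_d)$ is its $h$-vector. By Macaulay's theorem, a vector $(1,f_0,\dots,f_{d-1})$ of positive integers is the $h$-vector of a Cohen–Macaulay simplicial complex iff $\kappa_{i+1}(f_i)\le f_{i-1}$ for $0\le i\le d-1$. *)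

From HB Require Import structures.
From mathcomp Require Import all_boot all_order all_algebra all_field all_character.
Set Implicit Arguments. Unset Strict Implicit. Unset Printing Implicit Defensive.
Import Order.TTheory GRing.Theory Num.Theory.

(* Leading term of the i-th binomial (Macaulay) expansion of m:
   the largest a with 'C(a, i) <= m.  Since 'C(a, i) >= a - i + 1 for
   a >= i >= 1, the largest such a is < m + i + 1. *)
Definition macaulay_top (i m : nat) : nat :=
  \max_(a <- iota 0 (m + i).+1 | 'C(a, i) <= m) a.

(* kappa_i(m) = sum_k 'C(a_k - 1, k - 1) over the (greedy, hence unique)
   i-th binomial expansion m = 'C(a_i, i) + 'C(a_{i-1}, i-1) + ... + 'C(a_j, j),
   a_i > ... > a_j >= j >= 1. *)
Fixpoint kappa (i m : nat) {struct i} : nat :=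
  match i with
  | 0 => 0
  | i'.+1 =>
      if m == 0 then 0
      else let a := macaulay_top i m in
           'C(a.-1, i') + kappa i' (m - 'C(a, i))
  end.

(* f(t) = 1 + sum_{i=1}^{d} f_{i-1} t^i, with fs = [:: f_0; ...; f_{d-1}],
   viewed as a polynomial over the algebraic complex numbers. *)
Definition fpoly (fs : seq nat) : {poly algC} :=
  \poly_(i < (size fs).+1) ((nth 1%N (1%N :: fs) i)%:R : algC)%R.

(* Since f has positive coefficients, f(t) > 0 for t >= 0, so its real roots are
   negative and f is a positive multiple of a product of factors t + r, r > 0.
   Multiplying by t + r preserves the inequalities
   (k + 2) f_{k+1} f_{k-1} <= (k + 1) f_k^2, which are thus satisfied by f.
   On the Macaulay side, kappa_{i+1}(m) <= a as soon as m <= a^<i>, the upper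
   pseudopower sum_k 'C(a_k + 1, k + 1) of a, and i a^2 <= (i+1) kappa_i(a) a^<i>;
   the latter follows by peeling off the leading binomial and applying the
   Cauchy-Schwarz inequality (u + v)^2 <= (K + k)(P + p) for u^2 <= KP, v^2 <= kp.
   Now induct on i: from kappa_i(f_{i-1}) <= f_{i-2} we get
   (i+1) f_i f_{i-2} <= i f_{i-1}^2 <= (i+1) f_{i-2} f_{i-1}^<i>, so f_i <= f_{i-1}^<i>
   and kappa_{i+1}(f_i) <= f_{i-1}. *)

From HB Require Import structures.
From mathcomp Require Import all_boot all_order all_algebra all_field all_character.
From mathcomp Require Import zify ring lra.
Import Order.TTheory GRing.Theory Num.Theory.
Set Implicit Arguments. Unset Strict Implicit. Unset Printing Implicit Defensive.

Lemma ltn_bin_addn n i : 0 < i -> n < 'C(n + i, i).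
Proof.
case: i => // i _; elim: n => [|n IHn]; first by rewrite add0n binn.
rewrite addSn binS; have : 0 < 'C(n + i.+1, i) by rewrite bin_gt0; lia.
lia.
Qed.

Lemma binS_pred n k : 0 < n -> 'C(n, k.+1) = 'C(n.-1, k.+1) + 'C(n.-1, k).
Proof. by case: n. Qed.

Lemma macaulay_topE i m b : 'C(b, i) <= m < 'C(b.+1, i) -> macaulay_top i m = b.
Proof.
case/andP=> le_bm lt_mb; apply/eqP; rewrite eqn_leq; apply/andP; split.
  apply/bigmax_leqP_seq => a _ le_am; rewrite leqNgt; apply/negP => lt_ba.
  by have := leq_bin2l i lt_ba; lia.
apply: (leq_bigmax_seq (F := id)) => //; rewrite mem_iota add0n ltnS.
case: (posnP i) => [i0 | i_gt0]; first by move: le_bm lt_mb; rewrite i0 !bin0; lia.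
case: (leqP i b) => [le_ib | ]; last lia.
by have := ltn_bin_addn (b - i) i_gt0; rewrite subnK //; lia.
Qed.

Lemma macaulay_topP i m : 0 < i ->
  'C(macaulay_top i m, i) <= m < 'C((macaulay_top i m).+1, i).
Proof.
move=> i_gt0; pose P a := 'C(a, i) <= m.
have P0 : exists a, P a by exists 0; rewrite /P bin0n gtn_eqF.
have P_bounded a : P a -> a <= m + i.
  rewrite /P; case: (leqP i a) => [le_ia | ]; last lia.
  by have := ltn_bin_addn (a - i) i_gt0; rewrite subnK //; lia.
case: (ex_maxnP P0 P_bounded) => b Pb b_max.
have lt_mb : m < 'C(b.+1, i) by rewrite ltnNge; apply/negP => /(b_max b.+1); rewrite ltnn.
by rewrite (@macaulay_topE i m b) //; apply/andP.
Qed.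

Lemma leq_macaulay_top i m : 0 < m -> i <= macaulay_top i m.
Proof.
move=> m_gt0; case: (posnP i) => [-> // | i_gt0].
have /andP[_ lt_m] := macaulay_topP m i_gt0.
rewrite leqNgt; apply/negP => lt_top.
by have := leq_bin2l i lt_top; rewrite binn; lia.
Qed.

Lemma macaulay_top_lt i m B : 0 < i -> m < 'C(B, i) -> macaulay_top i m < B.
Proof.
move=> i_gt0 lt_mB; have /andP[le_m _] := macaulay_topP m i_gt0.
rewrite ltnNge; apply/negP => le_B; have := leq_bin2l i le_B; lia.
Qed.

Definition macaulay_rest i m := m - 'C(macaulay_top i m, i).

Lemma macaulay_rest_lt i m :
  macaulay_rest i.+1 m < 'C(macaulay_top i.+1 m, i).
Proof.
have /andP[le_m lt_m] := macaulay_topP m (ltn0Sn i).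
by move: lt_m; rewrite /macaulay_rest binS; lia.
Qed.

Lemma kappa0n i : kappa i 0 = 0. Proof. by case: i. Qed.

Lemma kappaS i m : 0 < m ->
  kappa i.+1 m = 'C((macaulay_top i.+1 m).-1, i) + kappa i (macaulay_rest i.+1 m).
Proof. by case: m. Qed.

Fixpoint macaulay_pow (i m : nat) {struct i} : nat :=
  match i with
  | 0 => 0
  | i'.+1 =>
      if m == 0 then 0
      else 'C((macaulay_top i m).+1, i.+1) + macaulay_pow i' (macaulay_rest i m)
  end.

Lemma macaulay_pow0n i : macaulay_pow i 0 = 0. Proof. by case: i. Qed.

Lemma macaulay_powS i m : 0 < m -> macaulay_pow i.+1 m =
  'C((macaulay_top i.+1 m).+1, i.+2) + macaulay_pow i (macaulay_rest i.+1 m).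
Proof. by case: m. Qed.

Lemma kappa_leq_bin i m B : m < 'C(B, i.+1) -> kappa i.+1 m <= 'C(B.-1, i).
Proof.
elim: i m B => [|i IHi] m B lt_mB.
  by case: (posnP m) => [-> // | m_gt0]; rewrite kappaS //= !bin0.
case: (posnP m) => [-> | m_gt0]; first by rewrite kappa0n.
rewrite kappaS //; set c := macaulay_top i.+2 m.
have le_ic : i.+2 <= c := leq_macaulay_top i.+2 m_gt0.
have lt_cB : c < B := macaulay_top_lt (ltn0Sn i.+1) lt_mB.
have := IHi _ _ (macaulay_rest_lt i.+1 m); rewrite -/c => le_rest.
apply: (@leq_trans 'C(c, i.+1)); last by apply: leq_bin2l; lia.
by rewrite (binS_pred _ (leq_trans (ltn0Sn _) le_ic)); lia.
Qed.

Lemma macaulay_pow_lt_bin i m B : m < 'C(B, i) -> macaulay_pow i m < 'C(B.+1, i.+1).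
Proof.
elim: i m B => [|i IHi] m B lt_mB; first by rewrite bin1.
case: (posnP m) lt_mB => [-> | m_gt0] lt_mB.
  by move: lt_mB; rewrite macaulay_pow0n !bin_gt0.
rewrite macaulay_powS //; set c := macaulay_top i.+1 m.
have lt_cB : c < B := macaulay_top_lt (ltn0Sn i) lt_mB.
have lt_rest := IHi _ _ (macaulay_rest_lt i m); rewrite -/c in lt_rest.
apply: (@leq_trans 'C(c.+2, i.+2)); last by apply: leq_bin2l.
by rewrite [X in _ < X]binS; lia.
Qed.

Lemma leq_kappa_of_leq_pow i a m : m <= macaulay_pow i a -> kappa i.+1 m <= a.
Proof.
elim: i a m => [|i IHi] a m; first by rewrite leqn0 => /eqP->.
case: (posnP m) => [-> | m_gt0]; first by rewrite kappa0n.
case: (posnP a) => [-> | a_gt0]; first by rewrite macaulay_pow0n; lia.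
rewrite macaulay_powS // kappaS //.
move: (macaulay_topP a (ltn0Sn i)) (macaulay_topP m (ltn0Sn i.+1)).
move: (macaulay_rest_lt i a) (kappa_leq_bin (macaulay_rest_lt i.+1 m)).
rewrite /macaulay_rest; set c := macaulay_top i.+1 a; set b := macaulay_top i.+2 m.
move=> lt_rest_a le_rest_m /andP[le_a _] /andP[le_m _] le_pow.
case: (ltngtP b c.+1) => [lt_bc | lt_cb | ->].
- have b_gt0 : 0 < b := leq_trans (ltn0Sn _) (leq_macaulay_top i.+2 m_gt0).
  have := leq_bin2l i.+1 (lt_bc : b <= c); rewrite (binS_pred _ b_gt0); lia.
- have := leq_bin2l i.+2 lt_cb; have := macaulay_pow_lt_bin lt_rest_a.
  by rewrite [in 'C(c.+2, _)]binS; lia.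
- by have := IHi (a - 'C(c, i.+1)) (m - 'C(c.+1, i.+2)); rewrite /=; lia.
Qed.

Section RealInequalities.
Local Open Scope ring_scope.
Variable R : realDomainType.

Lemma sqr_addr_le_mul (K k P p u v : R) :
  0 <= K -> 0 <= k -> 0 <= P -> 0 <= p -> 0 <= u -> 0 <= v ->
  u ^+ 2 <= K * P -> v ^+ 2 <= k * p -> (u + v) ^+ 2 <= (K + k) * (P + p).
Proof.
move=> K0 k0 P0 p0 u0 v0 le_u le_v.
have cross : 2 * u * v <= K * p + k * P.
  rewrite -ler_sqr ?nnegrE; [ | nra | nra].
  have : 0 <= (K * p - k * P) ^+ 2 := sqr_ge0 _.
  have : u ^+ 2 * v ^+ 2 <= (K * P) * (k * p) by apply: ler_pM; nra.
  nra.
nra.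
Qed.

Lemma macaulay_step (n c C K P a k p : R) :
  0 <= n -> n + 1 <= c -> 0 <= C -> 0 <= K -> 0 <= P -> 0 <= a -> 0 <= k -> 0 <= p ->
  c * K = (n + 1) * C -> (n + 2) * P = (c + 1) * C ->
  a * (2 * c + 1) + C <= 2 * (n + 1) ^+ 2 * C ->
  n * a ^+ 2 <= (n + 1) * k * p ->
  (n + 1) * (C + a) ^+ 2 <= (n + 2) * (K + k) * (P + p).
Proof.
move=> n0 le_c C0 K0 P0 a0 k0 p0 eK eP le_aC le_kp.
(* U / (x y) and V / (x y) under-approximate (n + 1) C sqrt((c + 1) / c) and
   (n + 1) a sqrt(1 - 1 / (n + 1)^2) by means of 4 t (t + 1) <= (2 t + 1)^2;
   the condition a x <= C y on the remainder a makes U + V dominate x y (n + 1) (C + a). *)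
set x := 2 * c + 1; set y := 2 * (n + 1) ^+ 2 - 1.
set U := (n + 1) * C * (x + 1) * y; set V := (n + 1) * a * (y - 1) * x.
set s := (n + 1) * (n + 2) * (x * y) ^+ 2.
have c_gt0 : 0 < c by lra.
have x_gt0 : 0 < x by rewrite /x; lra.
have y_ge1 : 1 <= y by rewrite /y; nra.
have leU : U ^+ 2 <= K * (s * P).
  rewrite -(ler_pM2l c_gt0).
  have -> : c * (K * (s * P)) = (n + 1) * (x * y) ^+ 2 * (c * K) * ((n + 2) * P).
    by rewrite /s; ring.
  rewrite eK eP.
  have -> : c * U ^+ 2 = ((n + 1) * C * y) ^+ 2 * (c * (x + 1) ^+ 2) by rewrite /U; ring.
  have -> : (n + 1) * (x * y) ^+ 2 * ((n + 1) * C) * ((c + 1) * C)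
    = ((n + 1) * C * y) ^+ 2 * ((c + 1) * x ^+ 2) by ring.
  by apply: ler_wpM2l; [exact: sqr_ge0 | rewrite /x; nra].
have leV : V ^+ 2 <= k * (s * p).
  have -> : k * (s * p) = (x * y) ^+ 2 * (n + 2) * ((n + 1) * k * p) by rewrite /s; ring.
  apply: le_trans (_ : (x * y) ^+ 2 * (n + 2) * (n * a ^+ 2) <= _); last first.
    by apply: ler_wpM2l => //; apply: mulr_ge0; [exact: sqr_ge0 | lra].
  have -> : V ^+ 2 = (a * x) ^+ 2 * ((n + 1) ^+ 2 * (y - 1) ^+ 2) by rewrite /V; ring.
  have -> : (x * y) ^+ 2 * (n + 2) * (n * a ^+ 2) = (a * x) ^+ 2 * (n * (n + 2) * y ^+ 2).
    by ring.
  by apply: ler_wpM2l; [exact: sqr_ge0 | rewrite /y; nra].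
have leUV : (x * y * (n + 1)) * (C + a) <= U + V.
  have le_ax : a * x <= C * y by rewrite /x /y; lra.
  rewrite -subr_ge0.
  have -> : U + V - x * y * (n + 1) * (C + a) = (n + 1) * (C * y - a * x) by rewrite /U /V; ring.
  by apply: mulr_ge0; lra.
have : ((x * y * (n + 1)) * (C + a)) ^+ 2 <= (K + k) * (s * P + s * p).
  have s_ge0 : 0 <= s by rewrite /s; (do ! apply: mulr_ge0); rewrite ?sqr_ge0 //; lra.
  have U_ge0 : 0 <= U by rewrite /U; (do ! apply: mulr_ge0); lra.
  have V_ge0 : 0 <= V by rewrite /V; (do ! apply: mulr_ge0); lra.
  apply: le_trans (sqr_addr_le_mul K0 k0 (mulr_ge0 s_ge0 P0) (mulr_ge0 s_ge0 p0)
    U_ge0 V_ge0 leU leV).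
  by rewrite ler_sqr ?nnegrE ?addr_ge0 //; (do ! apply: mulr_ge0); lra.
have -> : (K + k) * (s * P + s * p) = (x * y) ^+ 2 * (n + 1) * ((n + 2) * (K + k) * (P + p)).
  by rewrite /s; ring.
have -> : ((x * y * (n + 1)) * (C + a)) ^+ 2 = (x * y) ^+ 2 * (n + 1) * ((n + 1) * (C + a) ^+ 2).
  by ring.
have pos : 0 < (x * y) ^+ 2 * (n + 1).
  by apply: mulr_gt0; [apply: exprn_gt0; apply: mulr_gt0 | ]; lra.
by rewrite ler_pM2l.
Qed.
End RealInequalities.

Lemma macaulay_rest_bound n c a : n < c -> a < 'C(c, n) ->
  a * (2 * c + 1) + 'C(c, n.+1) <= 2 * n.+1 ^ 2 * 'C(c, n.+1).
Proof.
move=> lt_nc lt_a.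
case: n lt_nc lt_a => [|n] lt_nc lt_a; first by move: lt_a; rewrite bin0; lia.
case: (ltngtP c n.+2) lt_a => [| lt_c | ->] lt_a; [lia | | ].
- have e_D := mul_bin_left c n.+1; set e := c - n.+1 in e_D.
  have e_ge2 : 2 <= e by rewrite /e; lia.
  have le_ea : e * a <= n.+2 * 'C(c, n.+2) by rewrite e_D leq_mul2l ltnW ?orbT.
  rewrite -(leq_pmul2l (ltnW e_ge2)).
  have : n.+2 * (2 * c + 1) + e <= 2 * n.+2 ^ 2 * e by rewrite /e; nia.
  nia.
- by move: lt_a; rewrite binn binSn; nia.
Qed.

Lemma leq_sqr_kappa_pow i a : i * a ^ 2 <= i.+1 * kappa i a * macaulay_pow i a.
Proof.
elim: i a => [// | n IHn] a.
case: (posnP a) => [-> | a_gt0]; first by rewrite muln0.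
rewrite kappaS // macaulay_powS //.
set c := macaulay_top n.+1 a; set r := macaulay_rest n.+1 a.
have lt_nc : n < c := leq_macaulay_top n.+1 a_gt0.
have eK : c * 'C(c.-1, n) = n.+1 * 'C(c, n.+1) by rewrite mul_bin_diag.
have eP : n.+2 * 'C(c.+1, n.+2) = c.+1 * 'C(c, n.+1) by rewrite -mul_bin_diag.
have le_rC := macaulay_rest_bound lt_nc (macaulay_rest_lt n a).
have le_kp := IHn r.
have /andP[le_Ca _] := macaulay_topP a (ltn0Sn n).
have -> : a = 'C(c, n.+1) + r by rewrite /r /macaulay_rest subnKC.
have := @macaulay_step int n%:R c%:R 'C(c, n.+1)%:R 'C(c.-1, n)%:R 'C(c.+1, n.+2)%:R
  r%:R (kappa n r)%:R (macaulay_pow n r)%:R.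
rewrite !ler0n; lia.
Qed.

Lemma kappa_leq_of_newton (A : nat -> nat) n :
  (forall k, k < n -> 0 < A k) ->
  (forall k, k.+2 <= n -> k.+2 * A k.+2 * A k <= k.+1 * A k.+1 ^ 2) ->
  forall i, i < n -> kappa i.+1 (A i.+1) <= A i.
Proof.
move=> A_gt0 newton; elim=> [|i IHi] lt_in.
  have := @kappa_leq_bin 0 (A 1) (A 1).+1; rewrite bin1 bin0 => /(_ (ltnSn _)).
  by move/leq_trans; apply; apply: A_gt0.
apply: leq_kappa_of_leq_pow.
have Ai_gt0 : 0 < i.+2 * A i by rewrite muln_gt0 A_gt0 //; lia.
rewrite -(leq_pmul2l Ai_gt0).
have key := leq_sqr_kappa_pow i.+1 (A i.+1).
have lc := newton i lt_in.
have := leq_mul (leq_mul (leqnn i.+2) (IHi (ltnW lt_in))) (leqnn (macaulay_pow i.+1 (A i.+1))).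
lia.
Qed.

Section NewtonInequalities.
Local Open Scope ring_scope.
Variable R : numDomainType.

(* x0, ..., x3 stand for q_(k-1), ..., q_(k+2), and the conclusion is the inequality
   at k for the coefficients q_(j-1) + r q_j of q * ('X + r%:P). *)
Lemma newton_mulXaddC k (r x0 x1 x2 x3 : R) :
  0 <= r -> 0 <= x0 -> 0 <= x1 -> 0 <= x2 -> 0 <= x3 ->
  (0 < x3 -> 0 < x1 * x2) ->
  k.+1%:R * x2 * x0 <= k%:R * x1 ^+ 2 -> k.+2%:R * x3 * x1 <= k.+1%:R * x2 ^+ 2 ->
  k.+2%:R * (x2 + r * x3) * (x0 + r * x1) <= k.+1%:R * (x1 + r * x2) ^+ 2.
Proof.
move=> r_ge0 x0_ge0 x1_ge0 x2_ge0 x3_ge0 x3_nz.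
rewrite -subr_ge0 => d0_ge0; rewrite -subr_ge0 => d1_ge0; rewrite -subr_ge0.
set d0 := k%:R * x1 ^+ 2 - _ in d0_ge0 *; set d1 := k.+1%:R * x2 ^+ 2 - _ in d1_ge0 *.
have k1_gt0 : 0 < k.+1%:R :> R by rewrite ltr0Sn.
have t0_ge0 : 0 <= k.+1%:R * x1 ^+ 2 - k.+2%:R * x2 * x0.
  rewrite -(pmulr_rge0 _ k1_gt0).
  have -> : k.+1%:R * (k.+1%:R * x1 ^+ 2 - k.+2%:R * x2 * x0) = k.+2%:R * d0 + x1 ^+ 2.
    by rewrite /d0; ring.
  by rewrite addr_ge0 ?mulr_ge0 ?exprn_ge0 ?ler0n.
have t1_ge0 : 0 <= k%:R * x1 * x2 - k.+2%:R * x3 * x0.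
  move: (x3_ge0); rewrite le0r => /orP[/eqP-> | /x3_nz x12_gt0].
    by rewrite mulr0 mul0r subr0 !mulr_ge0 ?ler0n.
  rewrite -(pmulr_rge0 _ (mulr_gt0 k1_gt0 x12_gt0)).
  have -> : k.+1%:R * (x1 * x2) * (k%:R * x1 * x2 - k.+2%:R * x3 * x0)
      = d1 * d0 + k.+1%:R * d1 * x2 * x0 + k.+2%:R * d0 * x3 * x1.
    by rewrite /d0 /d1; ring.
  by rewrite !addr_ge0 ?mulr_ge0 ?ler0n.
have -> : k.+1%:R * (x1 + r * x2) ^+ 2 - k.+2%:R * (x2 + r * x3) * (x0 + r * x1)
    = (k.+1%:R * x1 ^+ 2 - k.+2%:R * x2 * x0) + r * (k%:R * x1 * x2 - k.+2%:R * x3 * x0)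
      + r ^+ 2 * d1 by rewrite /d1; ring.
by rewrite addr_ge0 ?(addr_ge0 t0_ge0) ?mulr_ge0 ?exprn_ge0.
Qed.

(* Half of Newton's inequalities (the half that does not involve the degree);
   without internal zeros they survive multiplication by 'X + r%:P. *)
Definition newton_lc (q : {poly R}) :=
  [/\ forall j, 0 <= q`_j, forall j, 0 < q`_j.+1 -> 0 < q`_j &
      forall k, k.+2%:R * q`_k.+2 * q`_k <= k.+1%:R * q`_k.+1 ^+ 2].

Lemma newton_lcC c : 0 <= c -> newton_lc c%:P.
Proof.
move=> c_ge0; split=> [[|j] | j | k]; rewrite !coefC //= ?ltxx //.
by rewrite mulr0 mul0r expr0n mulr0.
Qed.

Lemma coef_mulXaddC (q : {poly R}) r j :
  (q * ('X + r%:P))`_j = (if j is j'.+1 then q`_j' else 0) + r * q`_j.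
Proof. by rewrite mulrDr coefD coefMX coefMC mulrC; case: j. Qed.

Lemma newton_lc_mulXaddC q r : 0 < r -> newton_lc q -> newton_lc (q * ('X + r%:P)).
Proof.
move=> r_gt0 [q_ge0 q_nz q_lc]; have r_ge0 := ltW r_gt0.
have prev_ge0 j : 0 <= (if j is j'.+1 then q`_j' else 0) by case: j.
split=> [j | j | k]; rewrite !coef_mulXaddC.
- by rewrite addr_ge0 ?mulr_ge0.
- move=> b_gt0; rewrite ltr_wpDl ?mulr_gt0 //.
  move: (q_ge0 j.+1); rewrite le0r => /orP[/eqP qj1_0 | /q_nz //].
  by move: b_gt0; rewrite qj1_0 mulr0 addr0.
- apply: (@newton_mulXaddC k r (if k is k'.+1 then q`_k' else 0)) => //.
  + by move=> /q_nz qk1_gt0; rewrite mulr_gt0 // q_nz.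
  + by case: k => [| k]; [rewrite mulr0 mul0r | apply: q_lc].
Qed.

Lemma newton_lc_prod c (rs : seq R) : 0 <= c -> all (fun z => z < 0) rs ->
  newton_lc (c *: \prod_(z <- rs) ('X - z%:P)).
Proof.
move=> c_ge0; elim: rs => [|z rs IHrs] /=; first by rewrite big_nil alg_polyC => _; apply: newton_lcC.
case/andP=> z_lt0 rs_lt0; rewrite big_cons scalerAr mulrC -polyCN.
by apply: newton_lc_mulXaddC; [rewrite oppr_gt0 | apply: IHrs].
Qed.

Lemma horner_gt0_coef_ge0 (p : {poly R}) x :
  (forall j, 0 <= p`_j) -> 0 < p`_0 -> 0 <= x -> 0 < p.[x].
Proof.
move=> p_ge0 p0_gt0 x_ge0.
have size_gt0 : (0 < size p)%N by rewrite size_poly_gt0; apply: contraTneq p0_gt0 => ->; rewrite coef0 ltxx.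
rewrite horner_coef -(prednK size_gt0) big_ord_recl expr0 mulr1.
apply: (lt_le_trans p0_gt0); rewrite lerDl.
by apply: sumr_ge0 => j _; rewrite mulr_ge0 ?exprn_ge0.
Qed.
End NewtonInequalities.

Lemma nth_cons1_gt0 fs j : all (fun x => 0 < x)%N fs -> (0 < nth 1 (1 :: fs) j)%N.
Proof.
move=> fs_gt0; case: j => //= j; case: (ltnP j (size fs)) => [|le_fs_j].
  by move/(all_nthP 1 fs_gt0).
by rewrite nth_default.
Qed.

Section FPoly.
Local Open Scope ring_scope.

Lemma coef_fpoly fs j :
  (fpoly fs)`_j = if (j <= size fs)%N then (nth 1 (1 :: fs) j)%:R else 0.
Proof. by rewrite coef_poly. Qed.

Lemma newton_lc_fpoly fs : all (fun x => 0 < x)%N fs ->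
  (forall z : algC, root (fpoly fs) z -> z \is Num.real) -> newton_lc (fpoly fs).
Proof.
move=> fs_gt0 real_roots.
have coef_ge0 j : 0 <= (fpoly fs)`_j by rewrite coef_fpoly; case: ifP.
have nth_gt0 j := nth_cons1_gt0 j fs_gt0.
have size_fs : size (fpoly fs) = (size fs).+1.
  by rewrite size_poly_eq // pnatr_eq0 -lt0n.
have lc_gt0 : 0 < lead_coef (fpoly fs) by rewrite lead_coefE size_fs coef_fpoly leqnn ltr0n.
have [rs fpolyE] := closed_field_poly_normal (fpoly fs).
rewrite fpolyE; apply: newton_lc_prod; first exact: ltW.
apply/allP => z z_rs.
have root_z : root (fpoly fs) z by rewrite fpolyE rootZ ?gt_eqF ?root_prod_XsubC.
rewrite real_ltNge ?real0 ?real_roots //; apply/negP => z_ge0.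
by move: root_z; rewrite /root gt_eqF // horner_gt0_coef_ge0 // coef_fpoly /= ltr0n.
Qed.

End FPoly.

Theorem corollary3p2 (fs : seq nat) :
  all (fun x => 0 < x)%N fs ->
  (forall z : algC, root (fpoly fs) z -> z \is Num.real) ->
  forall i : nat, (i < size fs)%N ->
    (kappa i.+1 (nth 0 fs i) <= nth 1 (1 :: fs) i)%N.
Proof.
move=> fs_gt0 real_roots i lt_i.
have [_ _ newton] := newton_lc_fpoly fs_gt0 real_roots.
rewrite (set_nth_default 1) //.
apply: (@kappa_leq_of_newton (fun k => nth 1 (1 :: fs) k) (size fs)) => // k le_k.
  exact: nth_cons1_gt0.
move: (newton k); rewrite !coef_fpoly le_k !(ltnW le_k) (ltnW (ltnW le_k)).
by rewrite -natrX -!natrM ler_nat.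
Qed.
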